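(* For every integer $n\ge2$, $\gamma_{tr3}(P_2\square P_n)=2n$.
   Context: $P_m$ denotes the directed path with vertex set $\{0,1,\dots,m-1\}$ and arcs $(i,i+1)$ for $0\le i\le m-2$. The Cartesian product $D_1\square D_2$ has vertex set $V(D_1)\times V(D_2)$, with an arc from $(x_1,y_1)$ to $(x_2,y_2)$ iff either $(x_1,x_2)$ is an arc of $D_1$ and $y_1=y_2$, or $x_1=x_2$ and $(y_1,y_2)$ is an arc of $D_2$. For a digraph $D$ and positive integer $k$, a $k$-rainbow dominating function on $D$ is $f:V(D)\to\mathcal P(\{1,\dots,k\})$ such that every $v$ with $f(v)=\emptyset$ satisfies $\bigcup_{u\in N^-(v)}f(u)=\{1,\dots,k\}$, where $N^-(v)$ is the set of in-neighbors of $v$; its weight is $\sum_v|f(v)|$. It is total if additionally the subdigraph induced by $\{v:f(v)\ne\emptyset\}$ has no isolated vertex (a vertex with neither in- nor out-neighbors in it). $\gamma_{trk}(D)$ is the minimum weight of a total $k$-rainbow dominating function. *)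

From mathcomp Require Import all_boot.
Set Implicit Arguments. Unset Strict Implicit. Unset Printing Implicit Defensive.

(* A digraph on a finite vertex type T is an arc relation [e : rel T];
   [e u v] means (u,v) is an arc. *)

Definition dipath (m : nat) : rel 'I_m := fun i j => val j == (val i).+1.
Arguments dipath m : clear implicits.

Definition cartprod (T1 T2 : finType) (e1 : rel T1) (e2 : rel T2) : rel (T1 * T2) :=
  fun x y => (e1 x.1 y.1 && (x.2 == y.2)) || ((x.1 == y.1) && e2 x.2 y.2).

(* Colours {1,...,k} are represented by 'I_k. *)
Definition rainbow_dom (T : finType) (k : nat) (e : rel T) (f : T -> {set 'I_k}) : bool :=
  [forall v : T, (f v == set0) ==> (\bigcup_(u | e u v) f u == [set: 'I_k])].

Definition total_rainbow_dom (T : finType) (k : nat) (e : rel T) (f : T -> {set 'I_k}) : bool :=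
  rainbow_dom e f &&
  [forall v : T, (f v != set0) ==> [exists u : T, (f u != set0) && (e u v || e v u)]].

Definition rd_weight (T : finType) (k : nat) (f : T -> {set 'I_k}) : nat :=
  \sum_(v : T) #|f v|.

(* gamma_{trk}(D): minimum weight over all total k-rainbow dominating functions.
   (If none exists the value defaults to k * |V|; irrelevant here.) *)
Definition gamma_trk (T : finType) (k : nat) (e : rel T) : nat :=
  \big[minn/(k * #|T|)%N]_(f : {ffun T -> {set 'I_k}} | total_rainbow_dom e f)
     rd_weight f.

(* Lower bound: write a_j = |f(0,j)| and b_j = |f(1,j)| for the two rows.
   The only in-neighbour of (0,j) is (0,j-1) (none for j = 0), and those of
   (1,j) are (0,j) and (1,j-1).  Hence a_0 >= 1, a_j = 0 forces a_(j-1) >= 3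
   and b_j = 0 forces a_j + b_(j-1) >= 3.  An induction on j then shows that
   the first j+1 columns weigh at least 2(j+1), with one unit of slack for each
   of a_j >= 3 and b_j >= 2 — exactly what is spent when the next column is
   light.  Upper bound: the constant function {1} is a total 3-rainbow
   dominating function of weight 2n, since every (i,j) is adjacent to (1-i,j). *)

From mathcomp Require Import all_boot.
From mathcomp Require Import zify.

Set Implicit Arguments.
Unset Strict Implicit.
Unset Printing Implicit Defensive.

Lemma bigmin_le (I : finType) (P : pred I) (F : I -> nat) x0 i :
  P i -> \big[minn/x0]_(j | P j) F j <= F i.
Proof.
move=> Pi; rewrite -big_filter.
have : i \in [seq j <- index_enum I | P j] by rewrite mem_filter Pi mem_index_enum.
elim: [seq _ <- _ | _] => [|x s IH] //; rewrite inE big_cons => /orP [/eqP ->|/IH h].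
  exact: geq_minl.
exact: leq_trans (geq_minr _ _) h.
Qed.

Section GammaTrk.

Variables (T : finType) (k : nat) (e : rel T).

Lemma gamma_trk_le_weight (f : {ffun T -> {set 'I_k}}) :
  total_rainbow_dom e f -> gamma_trk k e <= rd_weight f.
Proof. by move=> ef; apply: bigmin_le. Qed.

Lemma gamma_trk_ge (w : nat) :
  w <= k * #|T| ->
  (forall f : {ffun T -> {set 'I_k}}, rainbow_dom e f -> w <= rd_weight f) ->
  w <= gamma_trk k e.
Proof.
move=> w_le lb; apply: (big_ind (fun x => w <= x)) => //.
- by move=> x y wx wy; rewrite leq_min wx wy.
- by move=> f /andP [/lb].
Qed.

Lemma rainbow_dom_card_cover (f : T -> {set 'I_k}) v (S : {set 'I_k}) :
  rainbow_dom e f -> f v = set0 -> (forall u, e u v -> f u \subset S) -> k <= #|S|.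
Proof.
move=> /forallP /(_ v) /implyP fdom /eqP /fdom /eqP cover sub_S.
have : \bigcup_(u | e u v) f u \subset S by apply/bigcupsP.
by rewrite cover => /subset_leq_card; rewrite cardsT card_ord.
Qed.

Lemma total_rainbow_dom_const (c : 'I_k) :
  (forall v, exists u, e u v || e v u) ->
  total_rainbow_dom e [ffun _ => [set c]].
Proof.
move=> nbr; apply/andP; split.
  by apply/forallP => v; rewrite ffunE -cards_eq0 cards1.
apply/forallP => v; apply/implyP => _; apply/existsP.
have [u uv] := nbr v; exists u.
by rewrite ffunE -cards_eq0 cards1.
Qed.

Lemma rd_weight_const (c : 'I_k) : rd_weight [ffun _ : T => [set c]] = #|T|.
Proof.
by rewrite /rd_weight (eq_bigr (fun _ => 1)) ?sum1_card // => v _; rewrite ffunE cards1.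
Qed.

End GammaTrk.

(* At j = 0 the term [b j.-1] is [b 0], which vanishes whenever the
   hypothesis on [b] applies. *)
Lemma prefix_weight_ge (a b : nat -> nat) n :
  1 <= a 0 ->
  (forall j, 0 < j < n -> a j = 0 -> 3 <= a j.-1) ->
  (forall j, j < n -> b j = 0 -> 3 <= a j + b j.-1) ->
  forall j, j < n -> 2 * j.+1 + (3 <= a j) + (1 < b j) <= \sum_(i < j.+1) (a i + b i).
Proof.
move=> a0_ge a_empty b_empty; elim=> [|j IH] jn.
  rewrite big_ord_recr big_ord0 /=.
  have := b_empty 0 jn => /=.
  case: (leqP 3 (a 0)); case: (leqP 2 (b 0)) => /=; lia.
rewrite big_ord_recr /=.
have {IH} := IH (ltnW jn).
have := a_empty j.+1; have := b_empty j.+1 jn => /=.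
case: (leqP 3 (a j)); case: (leqP 2 (b j)); case: (leqP 3 (a j.+1));
  case: (leqP 2 (b j.+1)) => /=; lia.
Qed.

Section Ladder.

Variable m : nat.

Notation ladder := (cartprod (dipath 2) (dipath m.+1)).

Lemma ladder_in_top (u : 'I_2 * 'I_m.+1) j :
  j <= m -> ladder u (ord0, inord j) -> 0 < j /\ u = (ord0, inord j.-1).
Proof.
case: u => u1 u2 jm; rewrite /cartprod /dipath /= => /andP [/eqP -> /eqP u2S].
rewrite inordK // in u2S; split; first by rewrite u2S.
by congr pair; apply: val_inj; rewrite /= inordK u2S //; lia.
Qed.

Lemma ladder_in_bottom (u : 'I_2 * 'I_m.+1) j :
  j <= m -> ladder u (ord_max, inord j) ->
  u = (ord0, inord j) \/ u = (ord_max, inord j.-1).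
Proof.
case: u => u1 u2 jm; rewrite /cartprod /dipath /=.
case/orP => /andP [/eqP u1S /eqP u2S].
  by left; rewrite u2S; congr pair; apply: val_inj => /=; lia.
rewrite u1S inordK // in u2S *; right.
by congr pair; apply: val_inj; rewrite /= inordK u2S //; lia.
Qed.

Lemma ladder_weight_split (f : 'I_2 * 'I_m.+1 -> {set 'I_3}) :
  rd_weight f =
  \sum_(j < m.+1) (#|f (ord0, inord j)| + #|f (ord_max, inord j)|).
Proof.
rewrite /rd_weight; transitivity (\sum_(i < 2) \sum_(j < m.+1) #|f (i, j)|).
  by rewrite pair_bigA; apply: eq_bigr => -[].
rewrite big_ord_recr big_ord_recr big_ord0 /= add0n -big_split /=.
apply: eq_bigr => j _; rewrite inord_val.
by congr (#|f (_, _)| + _); apply: val_inj.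
Qed.

Lemma ladder_rainbow_weight_ge (f : 'I_2 * 'I_m.+1 -> {set 'I_3}) :
  rainbow_dom ladder f -> 2 * m.+1 <= rd_weight f.
Proof.
move=> fdom; rewrite ladder_weight_split.
pose a j := #|f (ord0, inord j)|; pose b j := #|f (ord_max, inord j)|.
have card0 (v : 'I_2 * 'I_m.+1) : #|f v| = 0 -> f v = set0.
  by move/eqP; rewrite cards_eq0 => /eqP.
have a0_ge : 1 <= a 0.
  rewrite lt0n; apply/negP => /eqP /card0 a0.
  suff : 3 <= #|(set0 : {set 'I_3})| by rewrite cards0.
  by apply: (rainbow_dom_card_cover fdom a0) => u /ladder_in_top [].
have a_empty j : 0 < j < m.+1 -> a j = 0 -> 3 <= a j.-1.
  move=> /andP [j0 jm] /card0 aj; apply: (rainbow_dom_card_cover fdom aj) => u.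
  by case/ladder_in_top => // _ ->.
have b_empty j : j < m.+1 -> b j = 0 -> 3 <= a j + b j.-1.
  move=> jm /card0 bj.
  apply: leq_trans (leq_card_setU (f (ord0, inord j)) (f (ord_max, inord j.-1))).
  apply: (rainbow_dom_card_cover fdom bj) => u /ladder_in_bottom [] // ->.
    exact: subsetUl.
  exact: subsetUr.
have := prefix_weight_ge a0_ge a_empty b_empty (ltnSn m).
by apply: leq_trans; lia.
Qed.

End Ladder.

Theorem proposition4p5 (n : nat) :
  2 <= n -> gamma_trk 3 (cartprod (dipath 2) (dipath n)) = (2 * n)%N.
Proof.
case: n => [|m] // _.
pose one : {ffun 'I_2 * 'I_m.+1 -> {set 'I_3}} := [ffun _ => [set ord0]].
have one_total : total_rainbow_dom (cartprod (dipath 2) (dipath m.+1)) one.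
  apply: total_rainbow_dom_const => -[v1 v2].
  exists (if val v1 == 0 then ord_max else ord0, v2).
  by rewrite /cartprod /dipath /= eqxx andbT; case: v1 => [[|[|i]] ?].
apply/eqP; rewrite eqn_leq; apply/andP; split.
  apply: leq_trans (gamma_trk_le_weight one_total) _.
  by rewrite rd_weight_const card_prod !card_ord.
apply: gamma_trk_ge => [|f]; last exact: ladder_rainbow_weight_ge.
by rewrite card_prod !card_ord; lia.
Qed.
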